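(* Let $n\ge2$, let $\delta_n=(n-1,n-2,\ldots,2,1)$, and let $\lambda\subseteq\delta_n$ be a partition. Define $\varphi$ on $n\times n$ matrices $M$ by $\varphi(M)_{ij}=M_{ij}+1$ if $j=n-i+2$ (so $2\le i\le n$), and $\varphi(M)_{ij}=M_{ij}$ otherwise. Then $\varphi$ is an integral equivalence from $\mathrm{PASM}(\delta_n/\lambda,n,n)$ onto $\mathrm{ASMCRY}(\lambda,n)$.
   Context: A partition $\mu=(\mu_1\ge\mu_2\ge\cdots)$ is a weakly decreasing sequence of nonnegative integers with finitely many nonzero terms, identified with the set of matrix positions $\{(i,j):i\ge1,1\le j\le\mu_i\}$; $\mu\subseteq\nu$ means $\mu_i\le\nu_i$ for all $i$. For $\mu\subseteq\delta_n$, the $n\times n$ matrix $M^\mu$ has entries $M^\mu_{1,\mu_1+1}=1$; for each $1\le k\le n-1$ with $\mu_k>\mu_{k+1}$, $M^\mu_{k+1,\mu_{k+1}+1}=1$ and $M^\mu_{k+1,\mu_k+1}=-1$; all other entries $0$. $\mathrm{PASM}(\delta_n/\lambda,n,n)$ is the convex hull in $\mathbb{R}^{n^2}$ of $\{M^\mu:\lambda\subseteq\mu\subseteq\delta_n\}$. An $n\times n$ alternating sign matrix is a matrix with entries in $\{-1,0,1\}$ whose partial column sums $\sum_{i'\le i}M_{i'j}$ and partial row sums $\sum_{j'\le j}M_{ij'}$ all lie in $\{0,1\}$ and whose every full row and column sum equals $1$; $\mathrm{ASM}(n)$ is the convex hull of these. $\mathrm{ASMCRY}(\lambda,n)=\{(a_{ij})\in\mathrm{ASM}(n):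 a_{ij}=0 \text{ whenever } i+j\ge n+3 \text{ or } (i,j)\in\lambda\}$. An integral equivalence between integer polytopes $\mathcal{P}\subset\mathbb{R}^d$, $\mathcal{Q}\subset\mathbb{R}^r$ is an affine map $\mathbb{R}^d\to\mathbb{R}^r$ mapping $\mathcal{P}$ bijectively onto $\mathcal{Q}$ and $\mathbb{Z}^d\cap\mathrm{aff}(\mathcal{P})$ bijectively onto $\mathbb{Z}^r\cap\mathrm{aff}(\mathcal{Q})$. *)

From HB Require Import structures.
From mathcomp Require Import all_boot all_order all_algebra.
From mathcomp Require Import reals.

Set Implicit Arguments.
Unset Strict Implicit.
Unset Printing Implicit Defensive.

Import Order.TTheory GRing.Theory Num.Theory.
Local Open Scope ring_scope.

(* Partitions: a partition mu is a weakly decreasing finite list of naturals;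
   mu_i (1-based) is [nth 0 mu (i-1)], and mu_i = 0 beyond the list.
   Throughout, matrix indices are 0-based: paper position (i,j) is (i-1,j-1). *)
Definition is_partition (mu : seq nat) : Prop := sorted geq mu.

Definition subpart (mu nu : seq nat) : Prop :=
  forall i : nat, (nth 0 mu i <= nth 0 nu i)%N.

Definition delta (n : nat) : seq nat := rev (iota 1 n.-1).

Definition in_part (mu : seq nat) (i j : nat) : bool := (j < nth 0 mu i)%N.

(* The matrix M^mu.  0-based: row 0 has a 1 in column mu_1;
   for 1 <= r <= n-1 (i.e. k = r, paper row k+1) with mu_k > mu_{k+1}:
   a 1 in column mu_{k+1} and a -1 in column mu_k. *)
Definition Mmu (R : pzRingType) (n : nat) (mu : seq nat) : 'M[R]_n :=
  \matrix_(i < n, j < n)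
    if (i == 0 :> nat) then ((j == nth 0 mu 0 :> nat)%:R : R)
    else if (nth 0 mu i < nth 0 mu i.-1)%N then
      ((j == nth 0 mu i :> nat)%:R - (j == nth 0 mu i.-1 :> nat)%:R : R)
    else 0.

Definition conv (R : realType) (V : lmodType R) (S : V -> Prop) : V -> Prop :=
  fun x => exists (k : nat) (p : 'I_k -> V) (w : 'I_k -> R),
    [/\ forall i, S (p i), forall i, 0 <= w i, \sum_(i < k) w i = 1
      & x = \sum_(i < k) w i *: p i].

Definition aff (R : realType) (V : lmodType R) (S : V -> Prop) : V -> Prop :=
  fun x => exists (k : nat) (p : 'I_k -> V) (w : 'I_k -> R),
    [/\ forall i, S (p i), \sum_(i < k) w i = 1
      & x = \sum_(i < k) w i *: p i].

Definition intmx (R : realType) (m n : nat) (M : 'M[R]_(m, n)) : Prop :=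
  forall i j, exists z : int, M i j = z%:~R.

Definition PASM (R : realType) (n : nat) (lambda : seq nat) : 'M[R]_n -> Prop :=
  conv (fun M : 'M[R]_n => exists mu : seq nat,
          [/\ is_partition mu, subpart lambda mu, subpart mu (delta n)
            & M = Mmu R n mu]).

Definition is_ASM (R : realType) (n : nat) (M : 'M[R]_n) : Prop :=
  [/\ forall i j, M i j = 0 \/ M i j = 1 \/ M i j = -1,
      forall i j, let s := \sum_(i' < n | (i' <= i)%N) M i' j in s = 0 \/ s = 1,
      forall i j, let s := \sum_(j' < n | (j' <= j)%N) M i j' in s = 0 \/ s = 1,
      forall i, \sum_(j < n) M i j = 1
    & forall j, \sum_(i < n) M i j = 1].

Definition ASM (R : realType) (n : nat) : 'M[R]_n -> Prop := conv (@is_ASM R n).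

(* ASMCRY(lambda, n): paper condition i+j >= n+3 (1-based) is i+j >= n+1 0-based *)
Definition ASMCRY (R : realType) (n : nat) (lambda : seq nat) : 'M[R]_n -> Prop :=
  fun A => ASM A /\
    (forall i j : 'I_n, ((n.+1 <= i + j)%N || in_part lambda i j) -> A i j = 0).

(* phi(M)_{ij} = M_{ij} + 1 iff j = n - i + 2 (1-based), i.e. i + j = n 0-based *)
Definition phi (R : realType) (n : nat) (M : 'M[R]_n) : 'M[R]_n :=
  \matrix_(i < n, j < n) (M i j + (if (i + j == n)%N then 1 else 0)).

Definition affine_map (R : realType) (m n m' n' : nat)
    (f : 'M[R]_(m, n) -> 'M[R]_(m', n')) : Prop :=
  exists (L : {linear 'M[R]_(m, n) -> 'M[R]_(m', n')}) (b : 'M[R]_(m', n')),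
    forall x, f x = L x + b.

Definition bij_onto (T U : Type) (f : T -> U) (A : T -> Prop) (B : U -> Prop) : Prop :=
  [/\ forall x, A x -> B (f x),
      forall x y, A x -> A y -> f x = f y -> x = y
    & forall y, B y -> exists x, A x /\ f x = y].

Definition integral_equiv (R : realType) (m n m' n' : nat)
    (f : 'M[R]_(m, n) -> 'M[R]_(m', n'))
    (P : 'M[R]_(m, n) -> Prop) (Q : 'M[R]_(m', n') -> Prop) : Prop :=
  [/\ affine_map f,
      bij_onto f P Q
    & bij_onto f (fun x => intmx x /\ aff P x) (fun y => intmx y /\ aff Q y)].

(* The map phi is the translation by the matrix C with ones at the 0-based positions i + j = n,
   i > 0.  In terms of column prefix sums, M^mu has a single 1 in each row k, at column mu_k, and C
   is the indicator of k + j >= n; as mu_k + k < n these never overlap, so M^mu + C is an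
   alternating sign matrix vanishing on the forbidden region {i + j > n} together with lambda.
   Conversely ASMCRY(lambda, n) is a face of ASM(n): on the forbidden region the column prefix sums
   of an ASM are forced to their extreme values (1 below the antidiagonal, 0 on lambda), so every
   ASM in a convex decomposition of a point of ASMCRY also vanishes there.  For such an ASM B the
   column prefix sums of B - C form 0/1 rows summing to 1, i.e. indicators of columns c_k, and
   B - C = M^c for the partition c, which lies between lambda and delta_n.  Hence
   PASM = ASMCRY - C, and translating by an integer matrix preserves affine hulls and lattice
   points. *)

From mathcomp Require Import all_boot all_order all_algebra.
From mathcomp Require Import reals.
From mathcomp Require Import zify lra.

Set Implicit Arguments.
Unset Strict Implicit.
Unset Printing Implicit Defensive.
Import Order.TTheory GRing.Theory Num.Theory.
Local Open Scope ring_scope.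

Section PrefixSum.
Variables (V : zmodType) (n : nat).
Implicit Types (F G : 'I_n -> V).

Definition psum F (k : nat) : V := \sum_(i < n | (i <= k)%N) F i.

Lemma psum0 F (i : 'I_n) : i = 0%N :> nat -> psum F 0 = F i.
Proof.
move=> i0; rewrite /psum (big_pred1 i) // => i'.
by rewrite /= -(inj_eq val_inj) /= i0 leqn0.
Qed.

Lemma psumS F k (lt_k1n : (k.+1 < n)%N) :
  psum F k.+1 = psum F k + F (Ordinal lt_k1n).
Proof.
rewrite /psum (bigD1 (Ordinal lt_k1n)) //= addrC; congr (_ + _).
apply: eq_bigl => i; rewrite -(inj_eq val_inj) /=.
by rewrite -[(i <= k)%N]/(i < k.+1)%N; case: ltngtP.
Qed.

Lemma psum_full F k : (n.-1 <= k)%N -> psum F k = \sum_i F i.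
Proof. by move=> le_n1k; apply: eq_bigl => i; have := ltn_ord i; lia. Qed.

Lemma psum_diff F (i : 'I_n) :
  F i = psum F i - (if (0 < i)%N then psum F i.-1 else 0).
Proof.
case def_i: (nat_of_ord i) => [|k] /=; first by rewrite subr0 (psum0 F def_i).
have lt_k1n : (k.+1 < n)%N by rewrite -def_i.
by rewrite (psumS F lt_k1n) addrC addKr; congr F; apply: val_inj.
Qed.

Lemma psumD F G k : psum (fun i => F i + G i) k = psum F k + psum G k.
Proof. exact: big_split. Qed.

Lemma psumB F G k : psum (fun i => F i - G i) k = psum F k - psum G k.
Proof. exact: sumrB. Qed.

Lemma psum_sum m (G : 'I_m -> 'I_n -> V) k :
  psum (fun i => \sum_(t < m) G t i) k = \sum_(t < m) psum (G t) k.
Proof. exact: exchange_big. Qed.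

Lemma col_psum_inj (A B : 'M[V]_n) :
  (forall k j : 'I_n, psum (fun i => A i j) k = psum (fun i => B i j) k) -> A = B.
Proof.
move=> eq_AB; apply/matrixP => i j.
rewrite (psum_diff (fun i => A i j)) (psum_diff (fun i => B i j)) eq_AB.
case: posnP => [//|i_gt0]; have lt_i1n : (i.-1 < n)%N by have := ltn_ord i; lia.
by rewrite -[i.-1]/(nat_of_ord (Ordinal lt_i1n)) eq_AB.
Qed.

End PrefixSum.

Lemma partition_nth_le (s : seq nat) i k :
  is_partition s -> (i <= k)%N -> (nth 0%N s k <= nth 0%N s i)%N.
Proof.
move=> s_part le_ik; case: (ltnP k (size s)) => [lt_ks|le_sk].
  have geq_trans : transitive geq by move=> x y z le_xy le_zx; apply: leq_trans le_zx le_xy.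
  by apply: (sorted_leq_nth geq_trans leqnn 0 s_part); rewrite ?inE //=; lia.
by rewrite nth_default.
Qed.

Lemma nth_delta n k : nth 0%N (delta n) k = (n.-1 - k)%N.
Proof.
rewrite /delta; case: (ltnP k n.-1) => lt_kn.
  by rewrite nth_rev size_iota // nth_iota; lia.
by rewrite nth_default ?size_rev ?size_iota //; lia.
Qed.

Lemma subpart_delta_lt mu n k :
  subpart mu (delta n) -> (k < n)%N -> (nth 0%N mu k + k < n)%N.
Proof. by move=> /(_ k); rewrite nth_delta; lia. Qed.

Section Matrices.
Variables (R : pzRingType) (n : nat).

Lemma sum_indicator (P : pred nat) a :
  \sum_(j < n | P j) (j == a :> nat)%:R = (P a && (a < n)%N)%:R :> R.
Proof.
case: (ltnP a n) => [lt_an|le_na].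
  rewrite big_mkcond (bigD1 (Ordinal lt_an)) //= eqxx big1 ?addr0 => [|j].
    by rewrite andbT; case: (P a).
  by rewrite -(inj_eq val_inj) => /negbTE /= ->; case: (P j).
rewrite andbF big1 // => j _; suff /negbTE -> : (j != a :> nat) by [].
by rewrite neq_ltn (leq_trans (ltn_ord j)).
Qed.

Definition antidiag_mx : 'M[R]_n := \matrix_(i < n, j < n) (i + j == n)%N%:R.

Lemma antidiag_mxE (i j : 'I_n) : antidiag_mx i j = (j == (n - i)%N :> nat)%:R.
Proof. by rewrite mxE; congr (_%:R); apply/eqP/eqP; have := ltn_ord i; lia. Qed.

Lemma psum_antidiag (j : 'I_n) k :
  (k < n)%N -> psum (fun i => antidiag_mx i j) k = (n <= k + j)%N%:R.
Proof.
move=> lt_kn; have lt_jn := ltn_ord j.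
rewrite /psum (eq_bigr (fun i : 'I_n => (i == (n - j)%N :> nat)%:R)) => [|i _].
  by rewrite (sum_indicator (fun i => i <= k)%N); congr (_%:R); lia.
by rewrite mxE; congr (_%:R); apply/eqP/eqP; lia.
Qed.

Lemma rowsum_antidiag (i : 'I_n) : \sum_j antidiag_mx i j = (0 < i)%N%:R.
Proof.
under eq_bigr do rewrite antidiag_mxE.
by rewrite (sum_indicator xpredT); congr (_%:R); have := ltn_ord i; lia.
Qed.

Section Mmu.
Variable mu : seq nat.
Hypothesis mu_part : is_partition mu.

Lemma MmuE (i j : 'I_n) : Mmu R n mu i j =
  (j == nth 0%N mu i :> nat)%:R - (if (0 < i)%N then (j == nth 0%N mu i.-1 :> nat)%:R else 0).
Proof.
rewrite mxE; case: posnP => [->|i_gt0]; first by rewrite subr0.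
case: ltnP => // le_mu; suff -> : nth 0%N mu i = nth 0%N mu i.-1 by rewrite subrr.
by apply/eqP; rewrite eqn_leq le_mu partition_nth_le ?leq_pred.
Qed.

Lemma psum_Mmu (j : 'I_n) k :
  (k < n)%N -> psum (fun i => Mmu R n mu i j) k = (j == nth 0%N mu k :> nat)%:R.
Proof.
elim: k => [|k IHk] lt_kn; first by rewrite (psum0 _ (i := Ordinal lt_kn)) // MmuE subr0.
by rewrite (psumS _ lt_kn) IHk ?(ltnW lt_kn) // MmuE addrC subrK.
Qed.

End Mmu.
End Matrices.

Section Extremality.
Variable R : numDomainType.

Lemma wsum_eq0_support m (w x : 'I_m -> R) :
  (forall t, 0 <= w t) -> (forall t, 0 <= x t) -> \sum_t w t * x t = 0 ->
  forall t, w t != 0 -> x t = 0.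
Proof.
move=> w_ge0 x_ge0 wx0 t /negbTE wt_neq0.
have /eqP := psumr_eq0P (fun t _ => mulr_ge0 (w_ge0 t) (x_ge0 t)) wx0 (i := t) isT.
by rewrite mulf_eq0 wt_neq0 => /eqP.
Qed.

Lemma wavg_eq1_support m (w x : 'I_m -> R) :
  (forall t, 0 <= w t) -> (forall t, x t <= 1) ->
  \sum_t w t = 1 -> \sum_t w t * x t = 1 -> forall t, w t != 0 -> x t = 1.
Proof.
move=> w_ge0 x_le1 w1 wx1 t wt_neq0; apply/eqP; rewrite eq_sym -subr_eq0; apply/eqP.
apply: (wsum_eq0_support (x := fun s => 1 - x s) w_ge0 _ _ wt_neq0).
  by move=> s; rewrite subr_ge0.
by under eq_bigr do rewrite mulrBr mulr1; rewrite sumrB w1 wx1 subrr.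
Qed.

Lemma one_hot n (F : 'I_n -> R) :
  (forall j, F j = 0 \/ F j = 1) -> \sum_j F j = 1 ->
  exists c : 'I_n, forall j, F j = (j == c :> nat)%:R.
Proof.
move=> F01 F1; have F_ge0 j : 0 <= F j by case: (F01 j) => ->; rewrite ?ler01.
have [c /eqP Fc | F_neq1] := pickP (fun c => F c == 1); last first.
  suff : \sum_j F j = 0 by rewrite F1 => /eqP; rewrite oner_eq0.
  by apply: big1 => j _; case: (F01 j) => // Fj; have := F_neq1 j; rewrite Fj eqxx.
exists c => j; rewrite (inj_eq val_inj); have [->|neq_jc] := eqVneq j c; first by rewrite Fc.
move: F1; rewrite (bigD1 c) //= Fc -{2}[1]addr0 => /addrI rest0.
exact: (psumr_eq0P (fun i _ => F_ge0 i) rest0).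
Qed.

End Extremality.

Section ConvexCombinations.
Variables (R : realType) (V : lmodType R).
Implicit Types (S T : V -> Prop).

Lemma conv_comb_addr m (w : 'I_m -> R) (p : 'I_m -> V) c : \sum_t w t = 1 ->
  \sum_t w t *: p t + c = \sum_t w t *: (p t + c).
Proof.
move=> w1; rewrite [RHS](eq_bigr _ (fun t _ => scalerDr _ _ _)).
by rewrite big_split -scaler_suml w1 scale1r.
Qed.

Lemma conv_shift S T c : (forall x, S x -> T (x + c)) ->
  forall x, conv S x -> conv T (x + c).
Proof.
move=> ST _ [m [p [w [Sp w_ge0 w1 ->]]]].
by exists m, (fun t => p t + c), w; split=> // [t|]; [apply: ST | rewrite conv_comb_addr].
Qed.

Lemma aff_shift S T c : (forall x, S x -> T (x + c)) ->
  forall x, aff S x -> aff T (x + c).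
Proof.
move=> ST _ [m [p [w [Sp w1 ->]]]].
by exists m, (fun t => p t + c), w; split=> // [t|]; [apply: ST | rewrite conv_comb_addr].
Qed.

Lemma aff_shiftE S T c : (forall x, S x <-> T (x + c)) ->
  forall x, aff S x <-> aff T (x + c).
Proof.
move=> ST x; split; first by apply: aff_shift => y /(ST y).
by move=> /(aff_shift (c := - c)); rewrite addrK; apply=> y Ty; apply/ST; rewrite subrK.
Qed.

Lemma conv_sub S T : (forall x, S x -> T x) -> forall x, conv S x -> conv T x.
Proof. by move=> ST _ [m [p [w [Sp w_ge0 w1 ->]]]]; exists m, p, w; split=> // t; apply: ST. Qed.

Lemma conv_support S m (p : 'I_m -> V) (w : 'I_m -> R) :
  (exists s, S s) -> (forall t, 0 <= w t) -> \sum_t w t = 1 ->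
  (forall t, w t != 0 -> S (p t)) -> conv S (\sum_t w t *: p t).
Proof.
move=> [s Ss] w_ge0 w1 Sp; exists m, (fun t => if w t == 0 then s else p t), w.
split=> // [t|]; first by case: eqP => // /eqP; apply: Sp.
by apply: eq_bigr => t _; case: eqP => // ->; rewrite !scale0r.
Qed.

End ConvexCombinations.

Section AlternatingSignMatrices.
Variables (R : realType) (n : nat).
Local Notation C := (antidiag_mx R n).

Lemma phiE (M : 'M[R]_n) : phi M = M + C.
Proof. by apply/matrixP => i j; rewrite !mxE; case: eqP. Qed.

Definition forbidden (lam : seq nat) (i j : nat) : bool :=
  (n.+1 <= i + j)%N || in_part lam i j.

Definition vanishes (lam : seq nat) (M : 'M[R]_n) : Prop :=
  forall i j : 'I_n, forbidden lam i j -> M i j = 0.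

Section ColumnPrefixSums.
Variables (lam : seq nat) (M : 'M[R]_n).
Hypothesis lam_part : is_partition lam.

Lemma vanishes_psum1 : (forall j, \sum_i M i j = 1) -> vanishes lam M ->
  forall k j : 'I_n, (n <= k + j)%N -> psum (fun i => M i j) k = 1.
Proof.
move=> colsum1 M0 k j le_n_kj; rewrite -(colsum1 j) /psum big_mkcond /=.
apply: eq_bigr => i _; case: leqP => // lt_ki.
by rewrite M0 // /forbidden; apply/orP; left; lia.
Qed.

Lemma vanishes_psum0 : vanishes lam M ->
  forall k j : 'I_n, (j < nth 0%N lam k)%N -> psum (fun i => M i j) k = 0.
Proof.
move=> M0 k j lt_j_lamk; apply: big1 => i le_ik; apply: M0; apply/orP; right.
exact: leq_trans lt_j_lamk (partition_nth_le lam_part le_ik).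
Qed.

Lemma psum_vanishes :
  (forall k j : 'I_n, (n <= k + j)%N -> psum (fun i => M i j) k = 1) ->
  (forall k j : 'I_n, (j < nth 0%N lam k)%N -> psum (fun i => M i j) k = 0) ->
  vanishes lam M.
Proof.
move=> psum1 psum0 i j /orP forb_ij; rewrite (psum_diff (fun i => M i j)).
have lt_i1n : (i.-1 < n)%N := leq_ltn_trans (leq_pred i) (ltn_ord i).
have := ltn_ord j; case: forb_ij => [le_n1_ij | lt_j_lami] lt_jn.
  have i_gt0 : (0 < i)%N by lia.
  rewrite i_gt0 psum1 ?(psum1 (Ordinal lt_i1n)) ?subrr //=; lia.
rewrite psum0 //; case: posnP => [_|i_gt0]; first by rewrite subr0.
rewrite (psum0 (Ordinal lt_i1n)) ?subr0 //=.
exact: leq_trans lt_j_lami (partition_nth_le lam_part (leq_pred i)).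
Qed.

End ColumnPrefixSums.

Lemma entry_of_psum01 (F : 'I_n -> R) :
  (forall k, psum F k = 0 \/ psum F k = 1) -> forall i, F i = 0 \/ F i = 1 \/ F i = -1.
Proof.
move=> F01 i; rewrite (psum_diff F); case: posnP => _; rewrite ?subr0.
  by case: (F01 i) => ->; auto.
by case: (F01 i) => ->; case: (F01 i.-1) => ->; rewrite ?subrr ?subr0 ?sub0r; auto.
Qed.

Section ShiftedMmu.
Variable mu : seq nat.
Hypotheses (mu_part : is_partition mu) (mu_delta : subpart mu (delta n)).
Local Notation B := (Mmu R n mu + C).

Lemma psum_shifted_Mmu (j : 'I_n) k : (k < n)%N ->
  psum (fun i => B i j) k = ((j == nth 0%N mu k :> nat) || (n <= k + j)%N)%:R.
Proof.
move=> lt_kn; have := subpart_delta_lt mu_delta lt_kn.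
have -> : psum (fun i => B i j) k =
    psum (fun i => Mmu R n mu i j) k + psum (fun i => C i j) k.
  by rewrite -psumD; apply: eq_bigr => i _; rewrite mxE.
rewrite psum_Mmu // psum_antidiag //; case: eqP => [-> bound|_]; last by rewrite add0r.
by rewrite leqNgt addnC bound addr0.
Qed.

Lemma psum_shifted_Mmu01 (j : 'I_n) k :
  let s := psum (fun i => B i j) k in s = 0 \/ s = 1.
Proof.
have lt_n1n : (n.-1 < n)%N by have := ltn_ord j; lia.
have [lt_kn | le_nk] := ltnP k n.
  by rewrite /= psum_shifted_Mmu //; case: (_ || _); [right|left].
rewrite /= psum_full ?(leq_trans (leq_pred n)) // -(psum_full _ (leqnn n.-1)).
by rewrite psum_shifted_Mmu //; case: (_ || _); [right|left].
Qed.

Lemma shifted_MmuE (i j : 'I_n) : B i j = (j == nth 0%N mu i :> nat)%:R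
  - (if (0 < i)%N then (j == nth 0%N mu i.-1 :> nat)%:R else 0) + (j == (n - i)%N :> nat)%:R.
Proof. by rewrite mxE MmuE // antidiag_mxE. Qed.

Lemma rowsum_shifted_Mmu (P : pred nat) (i : 'I_n) : \sum_(j < n | P j) B i j =
  (P (nth 0%N mu i))%:R - (if (0 < i)%N then (P (nth 0%N mu i.-1))%:R else 0)
  + (P (n - i)%N && (0 < i)%N)%:R.
Proof.
have lt_in := ltn_ord i; have := subpart_delta_lt mu_delta lt_in.
under eq_bigr do rewrite shifted_MmuE.
rewrite big_split sumrB /= !sum_indicator => bound.
have -> : (nth 0%N mu i < n)%N by lia.
have -> : (n - i < n)%N = (0 < i)%N by lia.
rewrite andbT; case: posnP => [_ | i_gt0]; first by rewrite big1 ?subr0.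
have := subpart_delta_lt mu_delta (leq_ltn_trans (leq_pred i) lt_in).
by move=> /(leq_ltn_trans (leq_addr _ _)) lt_mun; rewrite sum_indicator lt_mun andbT.
Qed.

Lemma shifted_Mmu_ASM : is_ASM B.
Proof.
split=> [i j | i j | i j | i | j].
- by apply: (entry_of_psum01 (F := fun i => B i j)) => k; apply: psum_shifted_Mmu01.
- exact: psum_shifted_Mmu01.
- rewrite /= (rowsum_shifted_Mmu (fun j' => j' <= j)%N).
  have lt_in := ltn_ord i; case: posnP => [_ | i_gt0].
    by rewrite subr0 andbF addr0; case: leqP; auto.
  have := subpart_delta_lt mu_delta (leq_ltn_trans (leq_pred i) lt_in).
  have := partition_nth_le mu_part (leq_pred i); rewrite andbT.
  case: (leqP (nth 0%N mu i.-1) j) => [le_mu1_j le_mu_mu1 _ | lt_j_mu1 _ bound1].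
    by rewrite (leq_trans le_mu_mu1) // subrr add0r; case: leqP; auto.
  have /negbTE -> : ~~ (n - i <= j)%N by lia.
  by rewrite subr0 addr0; case: leqP; auto.
- rewrite (rowsum_shifted_Mmu xpredT) /=.
  by case: posnP => _; rewrite ?subr0 ?addr0 // subrr add0r.
- have lt_n1n : (n.-1 < n)%N by have := ltn_ord j; lia.
  rewrite -(psum_full _ (leqnn n.-1)) psum_shifted_Mmu //.
  have := subpart_delta_lt mu_delta lt_n1n.
  case: eqP => [//|neq_j_mu] bound.
  by have -> : (n <= n.-1 + j)%N by lia.
Qed.

Lemma shifted_Mmu_vanishes lam :
  is_partition lam -> subpart lam mu -> vanishes lam B.
Proof.
move=> lam_part lam_mu; apply: psum_vanishes => // k j.
  by move=> le_n_kj; rewrite psum_shifted_Mmu // le_n_kj orbT.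
move=> lt_j_lamk; have := lam_mu k; have := subpart_delta_lt mu_delta (ltn_ord k).
rewrite psum_shifted_Mmu // => bound le_lam_mu.
by rewrite (_ : _ || _ = false) //; apply/norP; split; lia.
Qed.

End ShiftedMmu.

Lemma ASM_psum_bounds (M : 'M[R]_n) :
  is_ASM M -> forall k j, 0 <= psum (fun i => M i j) k <= 1.
Proof.
case=> _ colpsum01 _ _ _ k j; rewrite /psum.
by case: (colpsum01 k j) => /= ->; rewrite ?lexx ?ler01.
Qed.

Lemma psum_conv_comb m (w : 'I_m -> R) (q : 'I_m -> 'M[R]_n) (j : 'I_n) k :
  psum (fun i => (\sum_s w s *: q s) i j) k = \sum_s w s * psum (fun i => q s i j) k.
Proof.
under [RHS]eq_bigr do rewrite /psum mulr_sumr.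
rewrite -psum_sum; apply: eq_bigr => i _.
by rewrite summxE; apply: eq_bigr => s _; rewrite mxE.
Qed.

Lemma ASM_face lam m (q : 'I_m -> 'M[R]_n) (w : 'I_m -> R) :
  is_partition lam -> (forall s, is_ASM (q s)) -> (forall s, 0 <= w s) ->
  \sum_s w s = 1 -> vanishes lam (\sum_s w s *: q s) ->
  forall t, w t != 0 -> vanishes lam (q t).
Proof.
move=> lam_part q_ASM w_ge0 w1 A0 t wt_neq0.
have q_bounds s k j := ASM_psum_bounds (q_ASM s) k j.
have colsum1 j : \sum_i (\sum_s w s *: q s) i j = 1.
  have lt_n1n : (n.-1 < n)%N by have := ltn_ord j; lia.
  rewrite -(psum_full _ (leqnn n.-1)) psum_conv_comb -[RHS]w1; apply: eq_bigr => s _.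
  by rewrite psum_full //; case: (q_ASM s) => _ _ _ _ ->; rewrite mulr1.
apply: psum_vanishes => // k j forb.
  have := vanishes_psum1 colsum1 A0 forb; rewrite psum_conv_comb => wavg1.
  apply: (wavg_eq1_support w_ge0 _ w1 wavg1 wt_neq0) => s.
  by case/andP: (q_bounds s k j).
have := vanishes_psum0 lam_part A0 forb; rewrite psum_conv_comb => wsum0.
apply: (wsum_eq0_support w_ge0 _ wsum0 wt_neq0) => s.
by case/andP: (q_bounds s k j).
Qed.

Section Vertices.
Variables (lam : seq nat) (B : 'M[R]_n).
Hypotheses (lam_part : is_partition lam) (lam_delta : subpart lam (delta n)).
Hypotheses (B_ASM : is_ASM B) (B0 : vanishes lam B).
Local Notation F k j := (psum (fun i => (B - C) i j) k).

Let colsum1 j : \sum_i B i j = 1. Proof. by case: B_ASM. Qed.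

Lemma psum_unshift (k j : 'I_n) :
  F k j = psum (fun i => B i j) k - (n <= k + j)%N%:R.
Proof.
rewrite -(@psum_antidiag R n j k (ltn_ord k)) -psumB.
by apply: eq_bigr => i _; rewrite !mxE.
Qed.

Lemma psum_unshift01 (k j : 'I_n) : F k j = 0 \/ F k j = 1.
Proof.
rewrite psum_unshift; case: leqP => [le_n_kj | _].
  by rewrite (vanishes_psum1 colsum1 B0) // subrr; left.
by rewrite subr0; case: B_ASM => _ colpsum01 _ _ _; apply: colpsum01.
Qed.

Lemma rowsum_psum_unshift (k : 'I_n) : \sum_j F k j = 1.
Proof.
rewrite -(psum_sum (fun j i => (B - C) i j)).
transitivity (psum (fun i : 'I_n => (i == 0%N :> nat)%:R : R) k).
  apply: eq_bigr => i _; rewrite (eq_bigr (fun j => B i j - C i j)); last by move=> j; rewrite !mxE.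
  rewrite sumrB rowsum_antidiag; case: B_ASM => _ _ _ -> _.
  by case: i => -[|i] /=; rewrite ?subr0 ?subrr.
rewrite /psum (@sum_indicator R n (fun i => i <= k)%N) leq0n.
by rewrite (leq_ltn_trans (leq0n k) (ltn_ord k)).
Qed.

Section Profile.
Variable c : 'I_n -> 'I_n.
Hypothesis F_c : forall k j : 'I_n, F k j = (j == c k :> nat)%:R.

Lemma profile_bound (k : 'I_n) : (k + c k < n)%N.
Proof.
rewrite ltnNge; apply/negP => le_n_kc.
move: (psum_unshift k (c k)); rewrite F_c eqxx (vanishes_psum1 colsum1 B0) // le_n_kc.
by move/eqP; rewrite subrr oner_eq0.
Qed.

Lemma lam_le_profile (k : 'I_n) : (nth 0%N lam k <= c k)%N.
Proof.
rewrite leqNgt; apply/negP => lt_c_lam.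
move: (psum_unshift k (c k)); rewrite F_c eqxx (vanishes_psum0 lam_part B0) //.
by rewrite leqNgt profile_bound subr0 => /eqP; rewrite oner_eq0.
Qed.

Lemma profile_mono k (lt_k1n : (k.+1 < n)%N) :
  (c (Ordinal lt_k1n) <= c (Ordinal (ltnW lt_k1n)))%N.
Proof.
set k1 := Ordinal lt_k1n; set k0 := Ordinal (ltnW lt_k1n).
rewrite leqNgt; apply/negP => lt_c0_c1.
(* A rise c k < c (k+1) makes the prefix sum of row k+1 of B up to column c k equal to -1. *)
have := profile_bound k0; have := profile_bound k1; rewrite /= => bound1 bound0.
have B_k1 j : B k1 j = (j == c k1 :> nat)%:R - (j == c k0 :> nat)%:R + C k1 j.
  have -> : B k1 j = (B - C) k1 j + C k1 j by rewrite !mxE subrK.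
  by rewrite (psum_diff (fun i => (B - C) i j)) /= (F_c k1) (F_c k0).
case: B_ASM => _ _ /(_ k1 (c k0)) /=; rewrite (eq_bigr _ (fun j _ => B_k1 j)).
rewrite big_split sumrB /=; under [X in _ + X]eq_bigr do rewrite antidiag_mxE.
rewrite !(@sum_indicator R n (fun i => i <= c k0)%N) /= leqnn !ltn_ord.
have /negbTE -> : ~~ (c k1 <= c k0)%N by rewrite -ltnNge.
have /negbTE -> : ~~ (n - k.+1 <= c k0)%N by rewrite -ltnNge; lia.
by rewrite /=; case=> H; lra.
Qed.

Definition profile : seq nat := [seq (c k : nat) | k <- enum 'I_n].

Lemma nth_profile (k : 'I_n) : nth 0%N profile k = c k.
Proof. by rewrite (nth_map k) ?size_enum_ord // nth_ord_enum. Qed.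

Lemma nth_profile_default k : (n <= k)%N -> nth 0%N profile k = 0%N.
Proof. by move=> le_nk; rewrite nth_default // size_map size_enum_ord. Qed.

Lemma profile_partition : is_partition profile.
Proof.
apply/(sortedP 0%N) => k; rewrite size_map size_enum_ord => lt_k1n.
by rewrite -[k]/(nat_of_ord (Ordinal (ltnW lt_k1n))) -[k.+1]/(nat_of_ord (Ordinal lt_k1n))
  !nth_profile; apply: profile_mono.
Qed.

Lemma lam_sub_profile : subpart lam profile.
Proof.
move=> k; case: (ltnP k n) => [lt_kn | le_nk].
  by rewrite -[k]/(nat_of_ord (Ordinal lt_kn)) nth_profile lam_le_profile.
by have := lam_delta k; rewrite nth_delta nth_profile_default //; lia.
Qed.

Lemma profile_sub_delta : subpart profile (delta n).
Proof.
move=> k; rewrite nth_delta; case: (ltnP k n) => [lt_kn | le_nk].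
  have := profile_bound (Ordinal lt_kn).
  by rewrite -[k]/(nat_of_ord (Ordinal lt_kn)) nth_profile /=; lia.
by rewrite nth_profile_default.
Qed.

Lemma unshift_Mmu : B - C = Mmu R n profile.
Proof.
apply: col_psum_inj => k j.
by rewrite F_c psum_Mmu ?nth_profile //; exact: profile_partition.
Qed.

End Profile.

Lemma vanishing_ASM_shifted_Mmu : exists mu, [/\ is_partition mu,
  subpart lam mu, subpart mu (delta n) & B = Mmu R n mu + C].
Proof.
have [c F_c] := fin_all_exists (fun k => one_hot (psum_unshift01 k) (rowsum_psum_unshift k)).
exists (profile c); split.
- exact: profile_partition F_c.
- exact: lam_sub_profile F_c.
- exact: profile_sub_delta F_c.
- by rewrite -(unshift_Mmu F_c) subrK.
Qed.

End Vertices.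

Lemma vanishes_lin_comb lam m (w : 'I_m -> R) (q : 'I_m -> 'M[R]_n) :
  (forall t, vanishes lam (q t)) -> vanishes lam (\sum_t w t *: q t).
Proof.
move=> q0 i j forb; rewrite summxE big1 // => t _.
by rewrite mxE q0 ?mulr0.
Qed.

Section Hulls.
Variable lam : seq nat.
Hypotheses (lam_part : is_partition lam) (lam_delta : subpart lam (delta n)).

Lemma ASMCRY_conv y :
  ASMCRY lam y <-> conv (fun B => is_ASM B /\ vanishes lam B) y.
Proof.
split=> [[[m [q [w [q_ASM w_ge0 w1 ->]]]] y0] | y_conv].
  apply: conv_support => // [|t wt_neq0]; last by split; [|apply: ASM_face wt_neq0].
  exists (Mmu R n lam + C); split; first exact: shifted_Mmu_ASM.
  exact: shifted_Mmu_vanishes.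
split; first by apply: conv_sub y_conv => B [].
case: y_conv => m [q [w [qV _ _ ->]]].
by apply: vanishes_lin_comb => t; case: (qV t).
Qed.

Lemma PASM_shift x : @PASM R n lam x <-> ASMCRY lam (x + C).
Proof.
rewrite ASMCRY_conv; split.
  apply: conv_shift => _ [mu [mu_part lam_mu mu_delta ->]].
  by split; [apply: shifted_Mmu_ASM | apply: shifted_Mmu_vanishes].
move=> /(conv_shift (c := - C)); rewrite addrK; apply=> B [B_ASM B0].
have [mu [mu_part lam_mu mu_delta ->]] := vanishing_ASM_shifted_Mmu lam_part lam_delta B_ASM B0.
by exists mu; rewrite addrK.
Qed.

End Hulls.

End AlternatingSignMatrices.

Lemma bij_onto_shift (V : zmodType) (f : V -> V) c (P Q : V -> Prop) :
  (forall x, f x = x + c) -> (forall x, P x <-> Q (x + c)) -> bij_onto f P Q.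
Proof.
move=> fE PQ; split=> [x /PQ | x y _ _ | y Qy]; rewrite ?fE //; first exact: addIr.
by exists (y - c); rewrite fE subrK; split=> //; apply/PQ; rewrite subrK.
Qed.

Lemma intmx_shift (R : realType) m n (c x : 'M[R]_(m, n)) :
  intmx c -> intmx x <-> intmx (x + c).
Proof.
move=> c_int; split=> x_int i j; have [zc czc] := c_int i j; have [z xz] := x_int i j.
  by exists (z + zc)%R; rewrite mxE xz czc intrD.
by exists (z - zc)%R; rewrite intrB -xz -czc mxE addrK.
Qed.

Lemma intmx_antidiag (R : realType) n : intmx (antidiag_mx R n).
Proof. by move=> i j; exists (i + j == n)%N%:Z; rewrite mxE. Qed.

Theorem mainTheorem8 (R : realType) (n : nat) (lambda : seq nat) :
  (2 <= n)%N -> is_partition lambda -> subpart lambda (delta n) ->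
  integral_equiv (@phi R n) (@PASM R n lambda) (@ASMCRY R n lambda).
Proof.
(* The argument works for every n. *)
move=> _ lam_part lam_delta.
have shiftE := @PASM_shift R n lambda lam_part lam_delta.
split.
- by exists (idfun : {linear 'M[R]_n -> 'M[R]_n}), (antidiag_mx R n) => x; rewrite phiE.
- by apply: (bij_onto_shift (c := antidiag_mx R n)) => x; [apply: phiE | apply: shiftE].
- apply: (bij_onto_shift (c := antidiag_mx R n)) => x; first exact: phiE.
  rewrite -intmx_shift; last exact: intmx_antidiag.
  by split=> -[x_int x_aff]; split=> //; apply/(aff_shiftE shiftE).
Qed.
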